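(* Let $i\in\mathbb N$. Every geodesic word in $G'$ (over the generators $a_0^{\pm1},a_1^{\pm1},\dots$) representing an element of the cyclic subgroup $\langle a_i\rangle$ uses only letters $a_j^{\pm1}$ with $j\ge i$.
   Context: Fix an integer $p\ge20$. $G'=\langle a_0,a_1,a_2,\dots\mid a_j^{-1}a_{j-1}a_j=a_{j-1}^p\ (j\ge1)\rangle$, with word metric relative to the generating set $\{a_0,a_1,\dots\}$. A word is geodesic if its length equals the word length of the element it represents. *)

From mathcomp Require Import all_boot.
Set Implicit Arguments. Unset Strict Implicit. Unset Printing Implicit Defensive.

(* A letter a_j^{+1} is (j, true), a_j^{-1} is (j, false). *)
Definition letter := (nat * bool)%type.
Definition word := seq letter.

Definition inv_letter (x : letter) : letter := (x.1, ~~ x.2).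

(* Relator for j >= 1 : a_j^{-1} a_{j-1} a_j a_{j-1}^{-p}  (i.e. a_j^{-1} a_{j-1} a_j = a_{j-1}^p). *)
Definition relator (p j : nat) : word :=
  [:: (j.+1, false); (j, true); (j.+1, true)] ++ nseq p (j, false).

(* Two words represent the same element of
   G' = < a_0, a_1, ... | a_j^{-1} a_{j-1} a_j = a_{j-1}^p (j >= 1) >:
   the smallest equivalence relation on words containing free cancellation
   and deletion of relators inside a word. *)
Inductive weq (p : nat) : word -> word -> Prop :=
| weq_refl w : weq p w w
| weq_sym u v : weq p u v -> weq p v u
| weq_trans u v w : weq p u v -> weq p v w -> weq p u w
| weq_free u v x : weq p (u ++ x :: inv_letter x :: v) (u ++ v)
| weq_rel u v j : weq p (u ++ relator p j ++ v) (u ++ v).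

Definition geodesic (p : nat) (w : word) : Prop :=
  forall w' : word, weq p w w' -> size w <= size w'.

Definition in_cyclic (p i : nat) (w : word) : Prop :=
  exists (n : nat) (b : bool), weq p w (nseq n (i, b)).

From mathcomp Require Import all_boot.

(* For a fixed index i, deleting every letter a_j^{+-1} with
   j < i is compatible with the defining relations of G': a relator for
   a_{j+1} with j >= i is kept intact, a relator with j + 1 < i disappears
   entirely, and the relator a_i^{-1} a_{i-1} a_i a_{i-1}^{-p} collapses to
   the freely trivial word a_i^{-1} a_i.  Hence this deletion maps equivalent
   words to equivalent words (it is the retraction of G' onto the subgroup
   generated by a_i, a_{i+1}, ...).  It fixes every power of a_i, so a word w
   representing an element of <a_i> is equivalent to the word obtained from
   w by deleting its letters of index < i.  If w is geodesic, that word can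
   not be shorter, so nothing was deleted: all letters of w have index >= i. *)

Definition above (i : nat) : pred letter := fun x => i <= x.1.

Definition kill_below (i : nat) (w : word) : word := filter (above i) w.

Lemma above_inv_letter (i : nat) (x : letter) :
  above i (inv_letter x) = above i x.
Proof. by []. Qed.

Lemma kill_below_free (p i : nat) (u v : word) (x : letter) :
  weq p (kill_below i (u ++ x :: inv_letter x :: v))
        (kill_below i (u ++ v)).
Proof.
rewrite /kill_below !filter_cat /=.
case: ifP => x_above; rewrite /= above_inv_letter x_above.
- exact: weq_free.
- exact: weq_refl.
Qed.

Lemma kill_below_relator (p i j : nat) (u v : word) :
  weq p (kill_below i (u ++ relator p j ++ v)) (kill_below i (u ++ v)).
Proof.
rewrite /kill_below !filter_cat filter_nseq /= /above /=.
have [le_ij | _] := leqP i j.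
  (* the relator is untouched *)
  by rewrite (leq_trans le_ij (leqnSn j)) mul1n; exact: weq_rel.
rewrite mul0n cats0.
(* j < i: if even j + 1 < i, the whole relator disappears *)
case: ifP => le_iSj; rewrite ?le_iSj; last exact: weq_refl.
(* j + 1 = i: only the free pair a_i^{-1} a_i is left *)
have := weq_free p (filter (above i) u) (filter (above i) v) (j.+1, false).
by rewrite /inv_letter /=.
Qed.

Lemma kill_below_weq (p i : nat) (u v : word) :
  weq p u v -> weq p (kill_below i u) (kill_below i v).
Proof.
elim=> {u v} [w | u v _ IH | u v w _ IH1 _ IH2 | u v x | u v j].
- exact: weq_refl.
- exact: weq_sym.
- exact: weq_trans IH1 IH2.
- exact: kill_below_free.
- exact: kill_below_relator.
Qed.

Lemma kill_below_power (i n : nat) (b : bool) :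
  kill_below i (nseq n (i, b)) = nseq n (i, b).
Proof. by apply/all_filterP; rewrite all_nseq /above /= leqnn orbT. Qed.

Lemma kill_below_size_all (i : nat) (w : word) :
  size w <= size (kill_below i w) -> all (above i) w.
Proof. by rewrite size_filter all_count eqn_leq count_size. Qed.

Theorem lemma5p2 (p : nat) (hp : 20 <= p) (i : nat) (w : word) :
  geodesic p w -> in_cyclic p i w -> all (fun x : letter => i <= x.1) w.
Proof.
move=> geo_w [n [b w_pow]].
have kill_w_pow : weq p (kill_below i w) (nseq n (i, b)).
  by rewrite -(kill_below_power i n b); exact: kill_below_weq.
have w_kill_w : weq p w (kill_below i w).
  exact: weq_trans w_pow (weq_sym kill_w_pow).
exact: kill_below_size_all (geo_w _ w_kill_w).
Qed.
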